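(* There is a universal constant $\alpha>1$ such that for all integers $p\ge 2$ and $k\ge 1$, every family of more than $(\alpha\, p\log(pk))^k$ distinct sets, each of size $k$, contains a $p$-sunflower.
   Context: A $p$-sunflower is a family of $p$ distinct sets whose pairwise intersections are all identical (i.e. there is a set $Y$ with $A\cap B=Y$ for every two distinct members $A,B$ of the family). All logarithms are base $2$. *)

From mathcomp Require Import all_boot.
From Stdlib Require Import Reals.
Set Implicit Arguments. Unset Strict Implicit. Unset Printing Implicit Defensive.

Definition log2 (x : R) : R := (ln x / ln 2)%R.

Definition is_sunflower (T : finType) (p : nat) (S : {set {set T}}) : Prop :=
  #|S| = p /\
  exists Y : {set T}, forall A B : {set T}, A \in S -> B \in S -> A != B -> A :&: B = Y.

From mathcomp Require Import all_boot zify.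

Set Implicit Arguments. Unset Strict Implicit. Unset Printing Implicit Defensive.

(* After Rao's coding proof of the Alweiss-Lovett-Wu-Zhang bound.  Call F
   r-spread if every nonempty Z lies in at most |F| / r^|Z| members.  If F is
   not spread for r = 64 p L, L = 3 (floor(log pk) + 1), some nonempty Z lies in
   more members; the link {A \ Z : Z <= A in F} is then a larger family of
   smaller sets, and a sunflower with core Y in it gives one with core Y u Z in
   F, so induction on k applies.
   If F is r-spread, colour the ground set with the colours (i, u), i < p,
   u < L.  For fixed i, shrink every member S in L rounds: in round u its
   residue is replaced by the residue, minus the class (i, u), of the member of
   smallest residue inside the class and the residue of S.  An empty residue
   yields a member of F coloured only by i.  A pair (colouring, S) whose residue
   does not halve is encoded by the colouring in which the new residue is
   recoloured (i, u), that residue, S, and its old colours; by spreadness such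
   pairs are so rare that the total residue drops by a factor 3/4 per round.
   After L rounds fewer than a 1/p fraction of the colourings fail for each i,
   so one colouring succeeds for all i and yields p pairwise disjoint members,
   a sunflower with empty core. *)

Lemma card_bigcup_le (I T : finType) (P : pred I) (B : I -> {set T}) :
  #|\bigcup_(i | P i) B i| <= \sum_(i | P i) #|B i|.
Proof.
elim/big_ind2: _ => [|m A n B' leA leB|i _] //; first by rewrite cards0.
exact: leq_trans (leq_card_setU A B').1 (leq_add leA leB).
Qed.

Lemma card_agree_off (T C : finType) (c0 : {ffun T -> C}) (D : {set T}) :
  #|[set c : {ffun T -> C} | [forall x in ~: D, c x == c0 x]]| <= #|C| ^ #|D|.
Proof.
pose restr (c : {ffun T -> C}) := [ffun x : {x | x \in D} => c (val x)].
rewrite -(card_in_imset (f := restr)); last first.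
  move=> c1 c2; rewrite !inE => /forall_inP agree1 /forall_inP agree2 /ffunP eq12.
  apply/ffunP => x; case: (boolP (x \in D)) => [xD | xnD].
    by have := eq12 (exist _ x xD); rewrite !ffunE.
  by rewrite (eqP (agree1 x _)) ?(eqP (agree2 x _)) ?inE.
apply: leq_trans (max_card _) _.
by rewrite card_ffun card_sig; apply: eq_leq; congr (_ ^ _); apply: eq_card.
Qed.

Lemma sum_nat_bool (I : finType) (P Q : pred I) :
  \sum_(i | P i) (Q i : nat) = #|[set i | P i && Q i]|.
Proof. by rewrite -sum1dep_card big_mkcondr; apply: eq_bigr => i _; case: (Q i). Qed.

Lemma sum_lt_of_mul_lt n N (x : 'I_n -> nat) :
  0 < n -> (forall i, n * x i < N) -> \sum_(i < n) x i < N.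
Proof.
move=> n_gt0 lt_xN; rewrite -(ltn_pmul2l n_gt0) big_distrr /=.
apply: (@leq_trans (\sum_(i < n) (n * x i + 1))).
  by rewrite big_split big_const_ord iter_addn_0 mul1n /= -addn1 leq_add2l.
rewrite -[n in n * N]card_ord -sum_nat_const.
by apply: leq_sum => i _; rewrite addn1.
Qed.

Lemma geometric_sum_le (X : nat) (y : nat -> nat) K :
  (forall j, 2 ^ j * y j <= X) -> \sum_(j < K) y j <= X.*2.
Proof.
move=> le_yX.
suff : (\sum_(j < K) y j) * 2 ^ K + X.*2 <= X.*2 * 2 ^ K.
  by move/(leq_trans (leq_addr _ _)); rewrite leq_pmul2r ?expn_gt0.
elim: K => [|K IH]; first by rewrite big_ord0 mul0n expn0 muln1.
rewrite big_ord_recr /= expnS.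
have := le_yX K; move: IH.
set s := \sum_(i < K) y i; set e := 2 ^ K; set yK := y K.
nia.
Qed.

Lemma geometric_decay (f : nat -> nat) L :
  (forall t, t < L -> 4 * f t.+1 <= 3 * f t) -> 4 ^ L * f L <= 3 ^ L * f 0.
Proof.
move=> contract; suff : forall n, n <= L -> 4 ^ n * f n <= 3 ^ n * f 0 by apply.
elim=> [|n IH] nL; first by rewrite !mul1n.
have := contract n nL; have := IH (ltnW nL); rewrite !expnS.
set x := 4 ^ n; set y := 3 ^ n.
nia.
Qed.

Section Residues.

Variables (T : finType) (F : {set {set T}}).
Implicit Types (S Y : {set T}) (ph : {set T} -> {set T}) (W : nat -> {set T}).

(* Ties are broken by [enum_rank], so that the minimizer below is canonical
   (see [minimizer_eq]); the decoding in [decodeP] depends on this. *)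
Definition lex_key ph S : nat := #|ph S| * #|{: {set T}}| + enum_rank S.

Lemma lex_key_inj ph : injective (lex_key ph).
Proof.
move=> S S' /(congr1 (modn^~ #|{: {set T}}|)).
by rewrite !modnMDl !modn_small ?ltn_ord // => /ord_inj/enum_rank_inj.
Qed.

Lemma lex_key_card ph S S' : lex_key ph S <= lex_key ph S' -> #|ph S| <= #|ph S'|.
Proof.
apply: contraTT; rewrite -!ltnNge => lt_card.
apply: (@leq_trans (#|ph S'|.+1 * #|{: {set T}}|)).
  by rewrite mulSn addnC ltn_add2l ltn_ord.
exact: leq_trans (leq_mul lt_card (leqnn _)) (leq_addr _ _).
Qed.

Definition fits ph Y S := (S \in F) && (ph S \subset Y).

Definition minimizer ph Y : {set T} :=
  if [pick S | fits ph Y S] is Some S0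
  then [arg min_(S < S0 | fits ph Y S) lex_key ph S] else set0.

Lemma minimizerP ph Y S : fits ph Y S ->
  fits ph Y (minimizer ph Y) /\
  forall S', fits ph Y S' -> lex_key ph (minimizer ph Y) <= lex_key ph S'.
Proof.
move=> fitS; rewrite /minimizer; case: pickP => [S0 fitS0 | /(_ S)]; last by rewrite fitS.
by case: (arg_minnP (lex_key ph) fitS0).
Qed.

Lemma minimizer_eq ph Y B : fits ph Y B ->
  (forall S', fits ph Y S' -> lex_key ph B <= lex_key ph S') -> minimizer ph Y = B.
Proof.
move=> fitB minB; have [fitM minM] := minimizerP fitB.
by apply: (@lex_key_inj ph); apply/eqP; rewrite eqn_leq minM // minB.
Qed.

Fixpoint residue t W S : {set T} :=
  if t is t'.+1 then
    residue t' W (minimizer (residue t' W) (W t' :|: residue t' W S)) :\: W t'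
  else S.

Lemma fits_residue t W S : S \in F -> fits (residue t W) (W t :|: residue t W S) S.
Proof. by move=> SF; rewrite /fits SF subsetUr. Qed.

Lemma residue_minimizer t W S (B := minimizer (residue t W) (W t :|: residue t W S)) :
  S \in F -> [/\ B \in F, residue t W B \subset W t :|: residue t W S
                & #|residue t W B| <= #|residue t W S|].
Proof.
move=> SF; have [/andP [BF fitB] minB] := minimizerP (fits_residue t W SF).
by split=> //; apply: lex_key_card; apply: minB; apply: fits_residue.
Qed.

Lemma residueS_sub t W S : S \in F -> residue t.+1 W S \subset residue t W S.
Proof. by move=> SF; have [_ fitB _] := residue_minimizer t W SF; rewrite subDset. Qed.

Lemma residue_sub t W S : S \in F -> residue t W S \subset S.
Proof.
by move=> SF; elim: t => [|t IH] //; apply: subset_trans (residueS_sub t W SF) IH.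
Qed.

Lemma residue_disjoint t W S u : u < t -> [disjoint residue t W S & W u].
Proof.
elim: t S => [|t IH] S //; rewrite ltnS leq_eqVlt => /predU1P [-> | ut] /=.
  by rewrite disjoints_subset subsetDr.
exact: disjointWl (subsetDl _ _) (IH _ ut).
Qed.

Lemma residue_cover t W S : S \in F ->
  exists2 A, A \in F & A \subset (\bigcup_(u < t) W u) :|: residue t W S.
Proof.
elim: t S => [|t IH] S SF /=; first by exists S; rewrite ?subsetUr.
have [BF _ _] := residue_minimizer t W SF.
have [A AF subA] := IH _ BF; exists A => //; apply: (subset_trans subA).
by rewrite big_ord_recr /= -setUA setUS // -subDset.
Qed.

Lemma eq_residue t W W' : (forall u, u < t -> W u = W' u) -> residue t W = residue t W'.
Proof.
elim: t => [|t IH] eqW //=.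
by rewrite IH ?eqW // => u /ltnW; apply: eqW.
Qed.

Definition decode t W := residue t W (minimizer (residue t W) (W t)).

(* Recolouring the new residue with the colour of round [t] loses nothing:
   the minimizer of round [t] can be recomputed from the recoloured classes. *)
Lemma decodeP t W W' S : S \in F ->
  (forall u, u < t -> W' u = W u) -> W' t = W t :|: residue t.+1 W S ->
  residue t.+1 W S \subset decode t W' /\ #|decode t W'| <= #|residue t W S|.
Proof.
move=> SF eqW eqWt.
have [BF fitB le_card] := residue_minimizer t W SF.
have [_ minB] := minimizerP (fits_residue t W SF).
set B := minimizer _ _ in BF fitB le_card minB.
have -> : decode t W' = residue t W B.
  rewrite /decode (eq_residue eqW) eqWt; congr residue; apply: minimizer_eq.
    by rewrite /fits BF /= -subDset.
  move=> S' /andP [S'F fitS']; apply: minB; rewrite /fits S'F.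
  by apply: subset_trans fitS' _; rewrite setUS // residueS_sub.
by rewrite subsetDl.
Qed.

End Residues.

Definition star (T : finType) (F : {set {set T}}) (Z : {set T}) :=
  [set A in F | Z \subset A].

Definition spread (T : finType) (F : {set {set T}}) (r : nat) :=
  forall Z : {set T}, Z != set0 -> #|star F Z| * r ^ #|Z| <= #|F|.

Section Colourings.

Variables (T : finType) (F : {set {set T}}) (p L : nat) (i : 'I_p).

Local Notation colouring := {ffun T -> 'I_p * 'I_L}.

Definition colour_class (c : colouring) (u : nat) : {set T} :=
  [set x | ((c x).1 == i) && ((c x).2 == u :> nat)].

Local Notation res t cs := (residue F t (colour_class cs.1) cs.2).

Definition fails t (c : colouring) :=
  [forall S in F, residue F t (colour_class c) S != set0].

Lemma failsS t c : fails t.+1 c -> fails t c.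
Proof.
move=> /forall_inP fail_t1; apply/forall_inP => S SF.
by apply: contraNneq (fail_t1 S SF); rewrite -subset0 => <-; apply: residueS_sub.
Qed.

Lemma fails_cover t c : ~~ fails t c ->
  exists2 A, A \in F & A \subset [set x | (c x).1 == i].
Proof.
case/forall_inPn => S SF; rewrite negbK => /eqP empty_res.
have [A AF subA] := residue_cover t (colour_class c) SF; exists A => //.
apply: subset_trans subA _; rewrite empty_res setU0.
by apply/bigcupsP => u _; apply/subsetP => x; rewrite !inE => /andP [].
Qed.

Definition bad t j := [set cs : colouring * {set T} |
  [&& cs.2 \in F, fails t cs.1, #|res t.+1 cs| == j & #|res t cs| < j.*2]].

Definition decodable t (c : colouring) j := [set D : {set T} |
  [&& D \subset decode F t (colour_class c), #|D| == j
    & #|decode F t (colour_class c)| < j.*2]].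

Lemma card_decodable t c j : #|decodable t c j| <= 4 ^ j.
Proof.
have [small | large] := ltnP #|decode F t (colour_class c)| j.*2; last first.
  rewrite (_ : decodable t c j = set0) ?cards0 //; apply/setP => D.
  by rewrite !inE ltnNge large !andbF.
apply: (@leq_trans #|powerset (decode F t (colour_class c))|).
  by apply: subset_leq_card; apply/subsetP => D; rewrite !inE => /and3P [].
by rewrite card_powerset (_ : 4 = 2 ^ 2) // -expnM leq_exp2l // mul2n ltnW.
Qed.

Definition recolour (c : colouring) (D : {set T}) (u : 'I_L) : colouring :=
  [ffun x => if x \in D then (i, u) else c x].

Lemma colour_class_recolour c (D : {set T}) (u : 'I_L) :
  colour_class (recolour c D u) u = colour_class c u :|: D.
Proof.
by apply/setP => x; rewrite !inE ffunE; case: (x \in D); rewrite /= ?eqxx ?orbT ?orbF.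
Qed.

Lemma colour_class_recolour_other c (D : {set T}) (u : 'I_L) (v : nat) : v != u ->
  [disjoint D & colour_class c v] -> colour_class (recolour c D u) v = colour_class c v.
Proof.
move=> vu disjD; apply/setP => x; rewrite !inE ffunE.
case: ifP => // xD; rewrite /= eq_sym (negbTE vu) andbF.
by have := disjointFr disjD xD; rewrite inE => ->.
Qed.

(* A bad pair [(c, S)] is recovered from the colouring [c'] that gives the new
   residue [D] the colour [(i, t)], from [D], from [S] (a member of [star F D]),
   and from the former colours of [D]. *)
Lemma bad_sub t j : t < L ->
  bad t j \subset \bigcup_(c' | fails t c') \bigcup_(D in decodable t c' j)
    setX [set c : colouring | [forall x in ~: D, c x == c' x]] (star F D).
Proof.
move=> tL; apply/subsetP => -[c S]; rewrite inE /= => /and4P [SF fail_c /eqP cardD small].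
set D := residue F t.+1 (colour_class c) S in cardD.
pose c' := recolour c D (Ordinal tL).
have eq_below u : u < t -> colour_class c' u = colour_class c u.
  move=> ut; apply: colour_class_recolour_other; first by rewrite neq_ltn ut.
  exact: residue_disjoint (leqW ut).
have eq_t := colour_class_recolour c D (Ordinal tL).
have [subD le_dec] := decodeP SF eq_below eq_t.
apply/bigcupP; exists c'.
  by rewrite /fails (eq_residue F eq_below).
apply/bigcupP; exists D; first by rewrite inE subD cardD eqxx (leq_ltn_trans le_dec small).
rewrite !inE /=; apply/andP; split.
  by apply/forall_inP => x; rewrite inE ffunE => /negbTE ->.
by rewrite SF (subset_trans (residueS_sub t _ SF) (residue_sub t _ SF)).
Qed.

Lemma card_bad_le t j r : t < L -> 0 < j -> spread F r ->
  #|bad t j| * r ^ j <= #|[set c | fails t c]| * 4 ^ j * (p * L) ^ j * #|F|.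
Proof.
move=> tL j_gt0 spreadF.
apply: leq_trans (leq_mul (subset_leq_card (bad_sub j tL)) (leqnn _)) _.
apply: leq_trans (leq_mul (card_bigcup_le _ _) (leqnn _)) _.
rewrite -!mulnA -sum_nat_cond_const big_distrl /=; apply: leq_sum => c' _.
apply: leq_trans (leq_mul (card_bigcup_le _ _) (leqnn _)) _.
rewrite big_distrl /=.
apply: (@leq_trans (\sum_(D in decodable t c' j) (p * L) ^ j * #|F|)); last first.
  by rewrite sum_nat_const leq_mul2r card_decodable orbT.
apply: leq_sum => D; rewrite inE => /and3P [_ /eqP cardD _].
rewrite cardsX -mulnA -cardD leq_mul //.
  by have := card_agree_off c' D; rewrite card_prod !card_ord.
by apply: spreadF; rewrite -card_gt0 cardD.
Qed.

Definition mass t :=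
  \sum_(cs : colouring * {set T} | fails t cs.1 && (cs.2 \in F)) #|res t cs|.

Lemma card_fails_le_mass t : #|[set c | fails t c]| * #|F| <= mass t.
Proof.
rewrite -cardsX -sum1_card /mass.
rewrite (eq_bigl (fun cs => fails t cs.1 && (cs.2 \in F))) => [|[c S]]; last first.
  by rewrite !inE.
apply: leq_sum => -[c S] /andP [/forall_inP fail_c SF].
by rewrite card_gt0 fail_c.
Qed.

Lemma mass0_le k : (forall A, A \in F -> #|A| = k) -> mass 0 <= #|{: colouring}| * #|F| * k.
Proof.
move=> Fk.
apply: (@leq_trans (\sum_(cs : colouring * {set T} | fails 0 cs.1 && (cs.2 \in F)) k)).
  by apply: leq_sum => -[c S] /andP [_ /Fk <-].
have -> : #|{: colouring}| * #|F| = #|setX [set: colouring] F| by rewrite cardsX cardsT.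
rewrite sum_nat_cond_const leq_mul2r; apply/orP; right.
by apply: subset_leq_card; apply/subsetP => -[c S]; rewrite !inE => /andP [_ ->].
Qed.

Lemma sum_bad_le t K : t < L -> spread F (64 * (p * L)) ->
  4 * \sum_(j < K) j * #|bad t j| <= #|[set c | fails t c]| * #|F|.
Proof.
move=> tL spreadF; set X := _ * #|F|.
suff : \sum_(j < K) 8 * (j * #|bad t j|) <= X.*2 by rewrite -big_distrr /=; lia.
apply: (geometric_sum_le (y := fun j => 8 * (j * #|bad t j|))) => -[|j].
  by rewrite !mul0n muln0.
set n := j.+1; set b := #|bad t n|.
have M_gt0 : 0 < 4 ^ n * (p * L) ^ n.
  rewrite muln_gt0 !expn_gt0 muln_gt0.
  by rewrite (leq_ltn_trans _ (ltn_ord i)) // (leq_ltn_trans _ tL).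
have le_bX : b * 16 ^ n <= X.
  rewrite -(leq_pmul2r M_gt0); have := card_bad_le tL (ltn0Sn j) spreadF.
  by rewrite -/n -/b (_ : 64 = 16 * 4) // !expnMn /X; lia.
have le_8n : 8 * n <= 8 ^ n by rewrite expnS leq_mul2l ltn_expl.
apply: leq_trans _ le_bX; rewrite (_ : 16 = 2 * 8) // expnMn.
by move: le_8n; set x := 2 ^ n; set y := 8 ^ n; nia.
Qed.

Lemma sum_shrinking_eq t K : #|T| < K ->
  \sum_(cs | fails t cs.1 && (cs.2 \in F))
     (#|res t cs| < #|res t.+1 cs|.*2) * #|res t.+1 cs|
  = \sum_(j < K) j * #|bad t j|.
Proof.
move=> TK.
have split_j cs : (#|res t cs| < #|res t.+1 cs|.*2) * #|res t.+1 cs|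
    = \sum_(j < K) ((#|res t cs| < #|res t.+1 cs|.*2) && (#|res t.+1 cs| == j)) * j.
  rewrite (bigD1 (Ordinal (leq_ltn_trans (max_card (res t.+1 cs)) TK))) //= eqxx andbT.
  rewrite big1 ?addn0 // => j /eqP ne_j; case: eqP; rewrite ?andbF // => eq_j.
  by case: ne_j; apply: ord_inj.
rewrite (eq_bigr _ (fun cs _ => split_j cs)) exchange_big /=; apply: eq_bigr => j _.
rewrite -big_distrl /= sum_nat_bool mulnC; congr (_ * _); apply: eq_card => cs.
rewrite !inE; case: (cs.2 \in F); case: (fails t cs.1); rewrite /= ?andbF //.
by case: eqP => [-> | _]; rewrite ?andbF ?andbT.
Qed.

(* Each pair either halves its residue in round [t] or is bad, and the bad pairs
   carry little residue by [sum_bad_le]. *)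
Lemma mass_contract t : t < L -> spread F (64 * (p * L)) -> 4 * mass t.+1 <= 3 * mass t.
Proof.
move=> tL spreadF.
have le_mass1 : mass t.+1 <= \sum_(cs | fails t cs.1 && (cs.2 \in F)) #|res t.+1 cs|.
  rewrite /mass big_mkcond [leqRHS]big_mkcond; apply: leq_sum => cs _.
  by case: ifP => // /andP [/failsS -> ->].
have halve : 2 * \sum_(cs | fails t cs.1 && (cs.2 \in F)) #|res t.+1 cs|
    <= mass t + 2 * \sum_(j < #|T|.+1) j * #|bad t j|.
  rewrite -sum_shrinking_eq // !big_distrr -big_split /=; apply: leq_sum => cs _.
  by case: ltnP; rewrite ?mul1n ?mul0n ?muln0 ?addn0 -?mul2n // => _; apply: leq_addl.
have := sum_bad_le #|T|.+1 tL spreadF; have := card_fails_le_mass t.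
by move: le_mass1 halve; lia.
Qed.

Lemma card_fails_lt k : 0 < L -> p * k * 3 ^ L < 4 ^ L ->
  (forall A, A \in F -> #|A| = k) -> 0 < #|F| -> spread F (64 * (p * L)) ->
  p * #|[set c | fails L c]| < #|{: colouring}|.
Proof.
move=> L_gt0 contract Fk F_gt0 spreadF.
set N := #|{: colouring}|; set P := #|[set c | fails L c]|.
have N_gt0 : 0 < N.
  rewrite /N card_ffun card_prod !card_ord expn_gt0 muln_gt0 L_gt0.
  by rewrite (leq_ltn_trans _ (ltn_ord i)).
have le_PN : 4 ^ L * P <= 3 ^ L * N * k.
  rewrite -(leq_pmul2r F_gt0) -mulnA.
  apply: leq_trans (leq_mul (leqnn _) (card_fails_le_mass L)) _.
  apply: leq_trans (geometric_decay (fun t tL => mass_contract tL spreadF)) _.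
  rewrite -!mulnA leq_mul2l; apply/orP; right.
  by apply: leq_trans (mass0_le Fk) _; lia.
rewrite -(ltn_pmul2l (expn_gt0 4 L)) mulnCA.
apply: leq_ltn_trans (leq_mul (leqnn p) le_PN) _.
by rewrite (_ : p * _ = p * k * 3 ^ L * N) ?ltn_pmul2r //; lia.
Qed.

End Colourings.

Lemma spread_disjoint_members (T : finType) (F : {set {set T}}) p k L :
  0 < p -> 0 < L -> p * k * 3 ^ L < 4 ^ L -> (forall A, A \in F -> #|A| = k) -> 0 < #|F| ->
  spread F (64 * (p * L)) ->
  exists f : 'I_p -> {set T},
    (forall i, f i \in F) /\ forall i j, i != j -> [disjoint f i & f j].
Proof.
move=> p_gt0 L_gt0 contract Fk F_gt0 spreadF.
pose failing i := [set c : {ffun T -> 'I_p * 'I_L} | fails F i L c].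
have [c good_c] : exists c : {ffun T -> 'I_p * 'I_L}, forall i, ~~ fails F i L c.
  have lt_card : #|\bigcup_(i < p) failing i| < #|{: {ffun T -> 'I_p * 'I_L}}|.
    apply: leq_ltn_trans (card_bigcup_le _ _) _; apply: sum_lt_of_mul_lt => // i.
    exact: card_fails_lt L_gt0 contract Fk F_gt0 spreadF.
  have /subsetPn [c _ c_good] : ~~ ([set: _] \subset \bigcup_(i < p) failing i).
    by apply: contraTN lt_card => /subset_leq_card; rewrite cardsT -leqNgt.
  by exists c => i; apply: contraNN c_good => fail_i; apply/bigcupP; exists i; rewrite ?inE.
have member i : exists A, (A \in F) && (A \subset [set x | (c x).1 == i]).
  by have [A AF subA] := fails_cover (good_c i); exists A; rewrite AF.
have [f fP] := fin_all_exists member.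
exists f; split => [i | i j ij]; first by case/andP: (fP i).
apply: disjointWl (proj2 (andP (fP i))) _; apply: disjointWr (proj2 (andP (fP j))) _.
by rewrite disjoints_subset; apply/subsetP => x; rewrite !inE => /eqP ->.
Qed.

Definition rounds p k := 3 * (trunc_log 2 (p * k)).+1.

Definition spread_bound p k := 64 * (p * rounds p k).

Lemma rounds_contract p k : p * k * 3 ^ rounds p k < 4 ^ rounds p k.
Proof.
rewrite /rounds !expnM; set m := (trunc_log 2 (p * k)).+1.
apply: (@leq_trans (2 ^ m * (3 ^ 3) ^ m)).
  by rewrite ltn_pmul2r ?expn_gt0 // trunc_log_ltn.
by rewrite -expnMn leq_exp2r.
Qed.

Lemma leq_spread_bound p k k' : k' <= k -> spread_bound p k' <= spread_bound p k.
Proof.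
by move=> le_k; rewrite !leq_mul2l ltnS leq_trunc_log ?orbT // leq_mul2l le_k orbT.
Qed.

Lemma sunflower_of_disjoint (T : finType) p (f : 'I_p -> {set T}) :
  (forall i, f i != set0) -> (forall i j, i != j -> [disjoint f i & f j]) ->
  is_sunflower p (f @: setT).
Proof.
move=> f_neq0 f_disj.
have f_inj : injective f.
  move=> i j eq_f; apply/eqP; apply: contraTT (f_neq0 j) => /f_disj.
  by rewrite -setI_eq0 eq_f setIid negbK.
split; first by rewrite card_imset // cardsT card_ord.
exists set0 => _ _ /imsetP [i _ ->] /imsetP [j _ ->] ne_f.
by apply/disjoint_setI0/f_disj; apply: contraNneq ne_f => ->.
Qed.

Lemma sunflower_of_spread (T : finType) (F : {set {set T}}) p k :
  0 < p -> 0 < k -> (forall A, A \in F -> #|A| = k) -> 0 < #|F| ->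
  spread F (spread_bound p k) -> exists S : {set {set T}}, S \subset F /\ is_sunflower p S.
Proof.
move=> p_gt0 k_gt0 Fk F_gt0 spreadF.
have [|f [fF f_disj]] :=
  spread_disjoint_members p_gt0 _ (rounds_contract p k) Fk F_gt0 spreadF.
  by rewrite muln_gt0.
exists (f @: setT); split; first by apply/subsetP => _ /imsetP [i _ ->].
by apply: sunflower_of_disjoint f_disj => i; rewrite -card_gt0 Fk.
Qed.

Definition link (T : finType) (F : {set {set T}}) (Z : {set T}) :=
  [set A :\: Z | A in star F Z].

Lemma card_link (T : finType) (F : {set {set T}}) Z : #|link F Z| = #|star F Z|.
Proof.
apply: card_in_imset => A B; rewrite !inE => /andP [_ ZA] /andP [_ ZB] eqD.
by rewrite -(setID A Z) -(setID B Z) (setIidPr ZA) (setIidPr ZB) eqD.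
Qed.

Lemma link_uniform (T : finType) (F : {set {set T}}) Z k :
  (forall A, A \in F -> #|A| = k) -> forall B, B \in link F Z -> #|B| = k - #|Z|.
Proof.
by move=> Fk B /imsetP [A]; rewrite inE => /andP [AF ZA] ->; rewrite cardsDS // Fk.
Qed.

Lemma sunflower_lift (T : finType) (F : {set {set T}}) Z p (S : {set {set T}}) :
  S \subset link F Z -> is_sunflower p S ->
  exists S' : {set {set T}}, S' \subset F /\ is_sunflower p S'.
Proof.
move=> S_link [cardS [Y core]].
have linkP B : B \in S -> (B :|: Z \in F) /\ (B :|: Z) :\: Z = B.
  move/(subsetP S_link) => /imsetP [A]; rewrite inE => /andP [AF ZA] ->.
  have eqA : A :\: Z :|: Z = A by rewrite setUC -{2}(setID A Z) (setIidPr ZA).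
  by rewrite eqA.
have lift_inj : {in S &, injective (fun B => B :|: Z)}.
  by move=> B1 B2 /linkP [_ eq1] /linkP [_ eq2] eqU; rewrite -eq1 -eq2 /= eqU.
exists [set B :|: Z | B in S]; split.
  by apply/subsetP => _ /imsetP [B /linkP [? _] ->].
split; first by rewrite card_in_imset.
exists (Y :|: Z) => _ _ /imsetP [B1 B1S ->] /imsetP [B2 B2S ->] ne.
by rewrite -setUIl core //; apply: contraNneq ne => ->.
Qed.

Lemma sunflower_of_large (T : finType) (F : {set {set T}}) p k :
  1 < p -> (forall A, A \in F -> #|A| = k) -> spread_bound p k ^ k < #|F| ->
  exists S : {set {set T}}, S \subset F /\ is_sunflower p S.
Proof.
move=> p_gt1; elim/ltn_ind: k F => k IH F Fk large.
set r := spread_bound p k in large.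
have F_gt0 : 0 < #|F| := leq_ltn_trans (leq0n _) large.
have k_gt0 : 0 < k.
  rewrite lt0n; apply: contraTneq large => k0; rewrite k0 expn0 -leqNgt.
  rewrite -(cards1 (set0 : {set T})); apply: subset_leq_card; apply/subsetP => A AF.
  by rewrite inE -cards_eq0 Fk ?k0.
have [Z /andP [Z_neq0 dense] | sparse] :=
  pickP (fun Z : {set T} => (Z != set0) && (#|F| < #|star F Z| * r ^ #|Z|)); last first.
  apply: sunflower_of_spread (ltnW p_gt1) k_gt0 Fk F_gt0 _ => Z Z_neq0.
  by have := sparse Z; rewrite Z_neq0 /= ltnNge => /negbFE.
have /card_gt0P [A] : 0 < #|star F Z|.
  by rewrite lt0n; apply: contraTneq dense => ->; rewrite mul0n.
rewrite inE => /andP [AF ZA].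
have le_Zk : #|Z| <= k by rewrite -(Fk A AF) subset_leq_card.
have lt_k : k - #|Z| < k by rewrite ltn_subrL k_gt0 card_gt0 Z_neq0.
have large_link : spread_bound p (k - #|Z|) ^ (k - #|Z|) < #|link F Z|.
  have r_gt0 : 0 < r ^ #|Z|.
    by rewrite expn_gt0 /r /spread_bound /rounds !muln_gt0 (ltnW p_gt1).
  rewrite card_link -(ltn_pmul2r r_gt0); apply: leq_ltn_trans (ltn_trans large dense).
  rewrite -{3}(subnK le_Zk) expnD leq_mul2r; apply/orP; right.
  case: (k - #|Z|) (leq_spread_bound p (leq_subr #|Z| k)) => // e le_bound.
  by rewrite leq_exp2r.
have [S [S_link sunS]] := IH _ lt_k _ (link_uniform Fk) large_link.
exact: sunflower_lift S_link sunS.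
Qed.

(* Imported last, so that [^] is the real power in [theorem1] as in its
   statement; on [nat] it now denotes [Nat.pow], hence [expn] below. *)
From Stdlib Require Import Reals Lra.

Lemma INR_expn (a n : nat) : INR (expn a n) = (INR a ^ n)%R.
Proof. by elim: n => [|n IH] //; rewrite expnS mulnE mult_INR IH. Qed.

Lemma log2_ge (t n : nat) : (expn 2 t <= n)%N -> (INR t <= log2 (INR n))%R.
Proof.
move=> le_n.
have ln2_gt0 : (0 < ln 2)%R by rewrite -ln_1; apply: ln_increasing; lra.
have pow_gt0 : (0 < 2 ^ t)%R by apply: pow_lt; lra.
have le_pow : (2 ^ t <= INR n)%R.
  by have := le_INR _ _ (elimT leP le_n); rewrite INR_expn /= (_ : (1 + 1 = 2)%R) //; lra.
rewrite /log2; apply: (Rmult_le_reg_r (ln 2)) => //.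
rewrite /Rdiv Rmult_assoc Rinv_l ?Rmult_1_r -?ln_pow; try lra.
case: (Rle_lt_or_eq_dec _ _ le_pow) => [lt_pow | <-]; last exact: Rle_refl.
by left; apply: ln_increasing.
Qed.

Lemma spread_bound_le p k : (2 <= p)%N -> (1 <= k)%N ->
  (INR (spread_bound p k) <= 384 * INR p * log2 (INR (p * k)))%R.
Proof.
move=> p_ge2 k_ge1; have n_ge2 : (2 <= p * k)%N by rewrite -[2]muln1 leq_mul.
have log_t := log2_ge (trunc_logP (isT : 1 < 2) (ltnW n_ge2)).
have log_1 : (1 <= log2 (INR (p * k)))%R by have := log2_ge (n := p * k) (t := 1) n_ge2.
have p_ge0 := pos_INR p.
have e64 : INR 64 = 64%R by rewrite INR_IZR_INZ.
have e3 : INR 3 = 3%R by rewrite INR_IZR_INZ.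
have -> : INR (spread_bound p k) = (192 * INR p * (INR (trunc_log 2 (p * k)) + 1))%R.
  by rewrite /spread_bound /rounds !mulnE !mult_INR e64 e3 S_INR; ring.
nra.
Qed.

Theorem theorem1 :
  exists alpha : R, (1 < alpha)%R /\
    forall (p k : nat), (2 <= p)%N -> (1 <= k)%N ->
    forall (T : finType) (F : {set {set T}}),
      (forall A : {set T}, A \in F -> #|A| = k) ->
      (INR #|F| > (alpha * INR p * log2 (INR (p * k))) ^ k)%R ->
      exists S : {set {set T}}, S \subset F /\ is_sunflower p S.
Proof.
exists 384%R; split; first lra.
move=> p k p_ge2 k_ge1 T F Fk large.
apply: (sunflower_of_large p_ge2 Fk); apply/ltP; apply: INR_lt.
rewrite INR_expn; apply: Rle_lt_trans large.
by apply: pow_incr; split; [exact: pos_INR | exact: spread_bound_le].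
Qed.
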